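(* Let $x\in(0,1)$ be irrational with OOCF expansion $((a_n,\varepsilon_n))_{n\ge1}$ and let $f(t)=\frac{1-t}{1+t}$. Define $\phi(k+1,-1)=(2k,-1)$ and $\phi(k,1)=(2k,1)$ for $k\ge1$. Then the EICF digits of $f(x)$ are $(b_n,\eta_n)=\phi(a_n,\varepsilon_n)$ for all $n\ge1$, and for all $n\ge1$ the $n$-th EICF convergent of $f(x)$ satisfies $p^E_n/q^E_n=f(p_n/q_n)$, where $p_n/q_n$ is the $n$-th OOCF principal convergent of $x$.
   Context: OOCF: digits $D=\{(1,1)\}\cup\{(a,\varepsilon):a\ge2,\ \varepsilon=\pm1\}$; $B(k+1,-1)=[\frac{k-1}{k},\frac{2k-1}{2k+1}]$, $B(k,1)=[\frac{2k-1}{2k+1},\frac{k}{k+1}]$ ($k\ge1$); $T(x)=\frac{kx-(k-1)}{k-(k+1)x}$ on $B(k+1,-1)$, $T(x)=\frac{k-(k+1)x}{kx-(k-1)}$ on $B(k,1)$, $T(1)=1$. The OOCF expansion of irrational $x\in(0,1)$ is the unique sequence $(a_n,\varepsilon_n)\in D$ with $T^{n-1}(x)\in B(a_n,\varepsilon_n)$ for all $n\ge1$; its $n$-th principal convergent is $p_n/q_n=1-\cfrac{1}{a_1+\cfrac{\varepsilon_1}{2-\cfrac{1}{\ddots\ \cfrac{\varepsilon_{n-1}}{2-\cfrac{1}{a_n+\varepsilon_n/2}}}}}$. EICF: $T_E:[0,1]\to[0,1]$, $T_E(y)=\frac1y-2k$ for $y\in[\frac1{2k+1},\frac1{2k}]$,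 $T_E(y)=2k-\frac1y$ for $y\in[\frac1{2k},\frac1{2k-1}]$ ($k\ge1$), $T_E(0)=0$. For irrational $y\in(0,1)$, its EICF digits are $(b_n,\eta_n)=(2k,1)$ if $T_E^{n-1}(y)\in[\frac1{2k+1},\frac1{2k}]$ and $(2k,-1)$ if $T_E^{n-1}(y)\in[\frac1{2k},\frac1{2k-1}]$; its $n$-th EICF convergent is $p^E_n/q^E_n=\cfrac{1}{b_1+\cfrac{\eta_1}{b_2+\cfrac{\eta_2}{\ddots+\cfrac{\eta_{n-1}}{b_n}}}}$. *)

From Stdlib Require Import Reals Lra Lia ZArith.
Open Scope R_scope.

Definition irrational (x : R) : Prop :=
  ~ exists (p q : Z), q <> 0%Z /\ x = IZR p / IZR q.

Definition inD (a : nat) (e : Z) : Prop :=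
  (a = 1%nat /\ e = 1%Z) \/ ((2 <= a)%nat /\ (e = 1%Z \/ e = (-1)%Z)).

(* cylinder B(a,eps):  B(k+1,-1) = [(k-1)/k, (2k-1)/(2k+1)],
                       B(k,1)    = [(2k-1)/(2k+1), k/(k+1)]   (k >= 1) *)
Definition inB (a : nat) (e : Z) (y : R) : Prop :=
  (e = (-1)%Z /\ (2 <= a)%nat /\
     let k := INR (a - 1) in (k - 1) / k <= y <= (2 * k - 1) / (2 * k + 1))
  \/
  (e = 1%Z /\ (1 <= a)%nat /\
     let k := INR a in (2 * k - 1) / (2 * k + 1) <= y <= k / (k + 1)).

(* For y in [0,1), the unique k >= 1 with
   y in [(k-1)/k, k/(k+1)) = B(k+1,-1) U B(k,1) is k = floor(1/(1-y));
   then the branch is chosen according to y <= (2k-1)/(2k+1).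
   (At common endpoints the two branches agree, so this is T.)  T(1) = 1. *)
Definition T (y : R) : R :=
  if Req_EM_T y 1 then 1 else
  let k := IZR (Int_part (1 / (1 - y))) in
  if Rle_dec y ((2 * k - 1) / (2 * k + 1))
  then (k * y - (k - 1)) / (k - (k + 1) * y)
  else (k - (k + 1) * y) / (k * y - (k - 1)).

Definition is_OOCF_expansion (x : R) (a : nat -> nat) (e : nat -> Z) : Prop :=
  forall n : nat, (1 <= n)%nat ->
    inD (a n) (e n) /\ inB (a n) (e n) (Nat.iter (n - 1) T x).

Fixpoint oocf_tail (a : nat -> nat) (e : nat -> Z) (i m : nat) : R :=
  match m with
  | O => INR (a i) + IZR (e i) / 2
  | S m' => INR (a i) + IZR (e i) / (2 - 1 / oocf_tail a e (S i) m')
  end.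

Definition oocf_conv (a : nat -> nat) (e : nat -> Z) (n : nat) : R :=
  1 - 1 / oocf_tail a e 1 (n - 1).

(* The EICF map T_E on [0,1]:  with m = floor(1/y),
   if m = 2k (y in (1/(2k+1), 1/(2k)]) then T_E(y) = 1/y - 2k,
   if m = 2k-1 (y in (1/(2k), 1/(2k-1)]) then T_E(y) = 2k - 1/y;
   branches agree at common endpoints.  T_E(0) = 0. *)
Definition TE (y : R) : R :=
  if Req_EM_T y 0 then 0 else
  let m := Int_part (1 / y) in
  if Z.even m then 1 / y - IZR m else IZR (m + 1) - 1 / y.

Definition eicf_cyl (b : nat) (eta : Z) (y : R) : Prop :=
  exists k : nat, (1 <= k)%nat /\ b = (2 * k)%nat /\
    ((eta = 1%Z /\ 1 / (2 * INR k + 1) <= y <= 1 / (2 * INR k)) \/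
     (eta = (-1)%Z /\ 1 / (2 * INR k) <= y <= 1 / (2 * INR k - 1))).

Definition is_EICF_expansion (y : R) (b : nat -> nat) (eta : nat -> Z) : Prop :=
  forall n : nat, (1 <= n)%nat -> eicf_cyl (b n) (eta n) (Nat.iter (n - 1) TE y).

Fixpoint eicf_tail (b : nat -> nat) (eta : nat -> Z) (i m : nat) : R :=
  match m with
  | O => INR (b i)
  | S m' => INR (b i) + IZR (eta i) / eicf_tail b eta (S i) m'
  end.

Definition eicf_conv (b : nat -> nat) (eta : nat -> Z) (n : nat) : R :=
  1 / eicf_tail b eta 1 (n - 1).

Definition fM (t : R) : R := (1 - t) / (1 + t).

Definition phi_b (a : nat) (e : Z) : nat :=
  if Z.eqb e (-1) then (2 * (a - 1))%nat else (2 * a)%nat.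
Definition phi_eta (a : nat) (e : Z) : Z := e.

(* The Möbius involution f(t) = (1-t)/(1+t) conjugates the OOCF map to the
   EICF map: it sends the OOCF cylinder B(k+1,-1) onto the EICF cylinder of
   (2k,-1) and B(k,1) onto that of (2k,1), and on each cylinder one checks
   by a direct computation that T_E (f y) = f (T y).  Hence f maps the T-orbit
   of x onto the T_E-orbit of f(x), cylinder by cylinder, which gives the
   digits; they are unique because an irrational point never lies on a
   (rational) cylinder boundary.  For the convergents, the digit map turns the
   OOCF tail t into the EICF tail 2t - 1, and f(1 - 1/t) = 1/(2t - 1). *)

From Stdlib Require Import Reals Lra Lia.
Open Scope R_scope.

Definition rational (r : R) : Prop := exists p q : Z, q <> 0%Z /\ r = IZR p / IZR q.

Lemma rational_IZR (z : Z) : rational (IZR z).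
Proof. exists z, 1%Z. split; [lia | field]. Qed.

Lemma rational_INR (n : nat) : rational (INR n).
Proof. rewrite INR_IZR_INZ. apply rational_IZR. Qed.

Lemma rational_plus (x y : R) : rational x -> rational y -> rational (x + y).
Proof.
  intros [p1 [q1 [H1 ->]]] [p2 [q2 [H2 ->]]].
  exists (p1 * q2 + p2 * q1)%Z, (q1 * q2)%Z. split; [lia |].
  rewrite plus_IZR, !mult_IZR. field. split; apply not_0_IZR; assumption.
Qed.

Lemma rational_opp (x : R) : rational x -> rational (- x).
Proof.
  intros [p [q [Hq ->]]]. exists (- p)%Z, q. split; [exact Hq |].
  rewrite opp_IZR. field. apply not_0_IZR, Hq.
Qed.

Lemma rational_mult (x y : R) : rational x -> rational y -> rational (x * y).
Proof.
  intros [p1 [q1 [H1 ->]]] [p2 [q2 [H2 ->]]].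
  exists (p1 * p2)%Z, (q1 * q2)%Z. split; [lia |].
  rewrite !mult_IZR. field. split; apply not_0_IZR; assumption.
Qed.

Lemma rational_inv (x : R) : rational x -> rational (/ x).
Proof.
  intros [p [q [Hq ->]]]. destruct (Z.eq_dec p 0) as [-> | Hp].
  - rewrite Rdiv_0_l, Rinv_0. apply (rational_IZR 0).
  - exists q, p. split; [exact Hp |]. field. split; apply not_0_IZR; assumption.
Qed.

Lemma rational_minus (x y : R) : rational x -> rational y -> rational (x - y).
Proof. intros. apply rational_plus; [| apply rational_opp]; assumption. Qed.

Lemma rational_div (x y : R) : rational x -> rational y -> rational (x / y).
Proof. intros. apply rational_mult; [| apply rational_inv]; assumption. Qed.

Lemma irrational_not_rational (z : R) : irrational z -> ~ rational z.
Proof. exact (fun H => H). Qed.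

Lemma irrational_transfer (z w : R) : irrational z -> (rational w -> rational z) -> irrational w.
Proof. intros Hz Hwz Hw. exact (Hz (Hwz Hw)). Qed.

#[local] Hint Resolve rational_IZR rational_INR rational_plus rational_opp rational_mult
  rational_inv rational_minus rational_div : rational.

Lemma rational_le_irrational (r z : R) : rational r -> irrational z -> r <= z -> r < z.
Proof. intros Hr Hz [H | ->]; [exact H | contradiction]. Qed.

Lemma irrational_le_rational (z r : R) : rational r -> irrational z -> z <= r -> z < r.
Proof. intros Hr Hz [H | ->]; [exact H | contradiction]. Qed.

Lemma Rdiv_le_iff (a b c : R) : 0 < c -> a / c <= b <-> a <= b * c.
Proof.
  intros Hc. split; intros H.
  - replace a with (a / c * c) by (field; lra). apply Rmult_le_compat_r; lra.
  - apply (Rmult_le_reg_r c); [exact Hc |]. replace (a / c * c) with a by (field; lra). exact H.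
Qed.

Lemma Rle_div_iff (a b c : R) : 0 < c -> b <= a / c <-> b * c <= a.
Proof.
  intros Hc. split; intros H.
  - replace a with (a / c * c) by (field; lra). apply Rmult_le_compat_r; lra.
  - apply (Rmult_le_reg_r c); [exact Hc |]. replace (a / c * c) with a by (field; lra). exact H.
Qed.

Lemma Rdiv_lt_iff (a b c : R) : 0 < c -> a / c < b <-> a < b * c.
Proof.
  intros Hc. split; intros H.
  - replace a with (a / c * c) by (field; lra). apply Rmult_lt_compat_r; lra.
  - apply (Rmult_lt_reg_r c); [exact Hc |]. replace (a / c * c) with a by (field; lra). exact H.
Qed.

Lemma Rlt_div_iff (a b c : R) : 0 < c -> b < a / c <-> b * c < a.
Proof.
  intros Hc. split; intros H.
  - replace a with (a / c * c) by (field; lra). apply Rmult_lt_compat_r; lra.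
  - apply (Rmult_lt_reg_r c); [exact Hc |]. replace (a / c * c) with a by (field; lra). exact H.
Qed.

Lemma Rdiv_le_div_iff (a b c d : R) : 0 < b -> 0 < d -> a / b <= c / d <-> a * d <= c * b.
Proof.
  intros Hb Hd. rewrite Rdiv_le_iff by exact Hb.
  replace (c / d * b) with (c * b / d) by (field; lra). apply Rle_div_iff, Hd.
Qed.

Lemma Int_part_unique (n : Z) (r : R) : IZR n <= r < IZR n + 1 -> Int_part r = n.
Proof. intros Hr. symmetry. apply Int_part_spec. lra. Qed.

Lemma fM_involutive (y : R) : y <> -1 -> fM (fM y) = y.
Proof. intros Hy. unfold fM. field. split; [lra | intros H; apply Hy; lra]. Qed.

Lemma one_div_fM (y : R) : -1 < y < 1 -> 1 / fM y = (1 + y) / (1 - y).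
Proof. intros Hy. unfold fM. field. split; lra. Qed.

Lemma irrational_fM (y : R) : irrational (fM y) <-> irrational y.
Proof.
  split; intros Hirr; apply (irrational_transfer _ _ Hirr); intros Hrat.
  - unfold fM. auto with rational.
  - assert (Hy : y <> -1)
      by (intros ->; apply (irrational_not_rational _ Hirr); auto with rational).
    rewrite <- (fM_involutive y Hy). unfold fM. auto with rational.
Qed.

Lemma irrational_TE (z : R) : irrational z -> irrational (TE z).
Proof.
  intros Hz. apply (irrational_transfer _ _ Hz). unfold TE.
  destruct (Req_EM_T z 0) as [-> | Hz0]; [auto with rational |].
  cbv zeta. destruct (Z.even (Int_part (1 / z))); intros Hrat.
  - replace z with (1 / ((1 / z - IZR (Int_part (1 / z))) + IZR (Int_part (1 / z))))
      by (field; split; [exact Hz0 | lra]).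
    auto with rational.
  - replace z with (1 / (IZR (Int_part (1 / z) + 1) - (IZR (Int_part (1 / z) + 1) - 1 / z)))
      by (field; split; [exact Hz0 | lra]).
    auto with rational.
Qed.

Lemma IZR_double_of_nat (k : nat) : IZR (2 * Z.of_nat k) = 2 * INR k.
Proof. rewrite mult_IZR, <- INR_IZR_INZ. reflexivity. Qed.

Section Cylinders.

Variable k : nat.
Hypothesis k_pos : (1 <= k)%nat.
Local Notation K := (INR k).

Let K_ge_1 : 1 <= K.
Proof. apply (le_INR 1), k_pos. Qed.

Lemma Int_part_one_div_one_minus (y : R) :
  (K - 1) / K <= y < K / (K + 1) -> Int_part (1 / (1 - y)) = Z.of_nat k.
Proof.
  rewrite Rdiv_le_iff, Rlt_div_iff by lra. intros Hy.
  apply Int_part_unique. rewrite <- INR_IZR_INZ.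
  rewrite Rle_div_iff, Rdiv_lt_iff by nra. nra.
Qed.

Lemma T_minus_branch (y : R) :
  (K - 1) / K <= y <= (2 * K - 1) / (2 * K + 1) ->
  T y = (K * y - (K - 1)) / (K - (K + 1) * y).
Proof.
  intros [Hlo Hhi]. assert (Hy1 : y < 1).
  { rewrite Rle_div_iff in Hhi by lra. nra. }
  unfold T. destruct (Req_EM_T y 1) as [E | _]; [lra |]. cbv zeta.
  rewrite Int_part_one_div_one_minus, <- INR_IZR_INZ.
  - destruct (Rle_dec y _) as [_ | Hn]; [reflexivity | contradiction].
  - split; [exact Hlo |]. rewrite Rle_div_iff in Hhi by lra.
    rewrite Rlt_div_iff by lra. nra.
Qed.

Lemma T_plus_branch (y : R) :
  (2 * K - 1) / (2 * K + 1) < y < K / (K + 1) ->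
  T y = (K - (K + 1) * y) / (K * y - (K - 1)).
Proof.
  intros [Hlo Hhi]. assert (Hlo' := Hlo). assert (Hhi' := Hhi).
  rewrite Rdiv_lt_iff in Hlo' by lra. rewrite Rlt_div_iff in Hhi' by lra.
  unfold T. destruct (Req_EM_T y 1) as [E | _]; [nra |]. cbv zeta.
  rewrite Int_part_one_div_one_minus, <- INR_IZR_INZ.
  - destruct (Rle_dec y _) as [Hn | _]; [lra | reflexivity].
  - split; [| exact Hhi]. rewrite Rdiv_le_iff by lra. nra.
Qed.

Lemma TE_odd_branch (z : R) : 0 < z -> 2 * K - 1 <= 1 / z < 2 * K -> TE z = 2 * K - 1 / z.
Proof.
  intros Hz Hbounds. unfold TE. destruct (Req_EM_T z 0) as [E | _]; [lra |]. cbv zeta.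
  rewrite (Int_part_unique (2 * Z.of_nat k - 1)) by (rewrite minus_IZR, IZR_double_of_nat; lra).
  replace (2 * Z.of_nat k - 1 + 1)%Z with (2 * Z.of_nat k)%Z by ring.
  rewrite IZR_double_of_nat, Z.even_sub, Z.even_mul. reflexivity.
Qed.

Lemma TE_even_branch (z : R) : 0 < z -> 2 * K <= 1 / z < 2 * K + 1 -> TE z = 1 / z - 2 * K.
Proof.
  intros Hz Hbounds. unfold TE. destruct (Req_EM_T z 0) as [E | _]; [lra |]. cbv zeta.
  rewrite (Int_part_unique (2 * Z.of_nat k)) by (rewrite IZR_double_of_nat; lra).
  rewrite Z.even_mul, IZR_double_of_nat. reflexivity.
Qed.

Lemma fM_minus_cylinder (y : R) :
  (K - 1) / K <= y <= (2 * K - 1) / (2 * K + 1) -> 1 / (2 * K) <= fM y <= 1 / (2 * K - 1).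
Proof.
  rewrite Rdiv_le_iff, Rle_div_iff by lra. intros Hy. unfold fM.
  rewrite !Rdiv_le_div_iff by nra. nra.
Qed.

Lemma fM_plus_cylinder (y : R) :
  (2 * K - 1) / (2 * K + 1) <= y <= K / (K + 1) -> 1 / (2 * K + 1) <= fM y <= 1 / (2 * K).
Proof.
  rewrite Rdiv_le_iff, Rle_div_iff by lra. intros Hy. unfold fM.
  rewrite !Rdiv_le_div_iff by nra. nra.
Qed.

Lemma TE_fM_minus_cylinder (y : R) : irrational y ->
  (K - 1) / K <= y <= (2 * K - 1) / (2 * K + 1) -> TE (fM y) = fM (T y).
Proof.
  intros Hirr Hy. rewrite T_minus_branch by exact Hy.
  assert (Hhi : y < (2 * K - 1) / (2 * K + 1))
    by (apply irrational_le_rational; auto with rational; apply Hy).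
  destruct Hy as [Hlo _]. rewrite Rdiv_le_iff in Hlo by lra.
  rewrite Rlt_div_iff in Hhi by lra.
  assert (Hinv : 1 / fM y = (1 + y) / (1 - y)) by (apply one_div_fM; nra).
  rewrite TE_odd_branch, Hinv.
  - unfold fM. field. repeat split; nra.
  - unfold fM. apply Rdiv_lt_0_compat; nra.
  - rewrite Hinv, Rle_div_iff, Rdiv_lt_iff by nra. nra.
Qed.

Lemma TE_fM_plus_cylinder (y : R) : irrational y ->
  (2 * K - 1) / (2 * K + 1) <= y <= K / (K + 1) -> TE (fM y) = fM (T y).
Proof.
  intros Hirr [Hlo Hhi].
  apply rational_le_irrational in Hlo; auto with rational.
  apply irrational_le_rational in Hhi; auto with rational.
  rewrite T_plus_branch by (split; assumption).
  rewrite Rdiv_lt_iff in Hlo by lra. rewrite Rlt_div_iff in Hhi by lra.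
  assert (Hinv : 1 / fM y = (1 + y) / (1 - y)) by (apply one_div_fM; nra).
  rewrite TE_even_branch, Hinv.
  - unfold fM. field. repeat split; nra.
  - unfold fM. apply Rdiv_lt_0_compat; nra.
  - rewrite Hinv, Rle_div_iff, Rdiv_lt_iff by nra. nra.
Qed.

End Cylinders.

Lemma eicf_cyl_fM (a : nat) (e : Z) (y : R) :
  inB a e y -> eicf_cyl (phi_b a e) (phi_eta a e) (fM y).
Proof.
  unfold phi_b, phi_eta. intros [[-> [Ha Hy]] | [-> [Ha Hy]]]; cbv zeta in Hy.
  - rewrite Z.eqb_refl. exists (a - 1)%nat. split; [lia | split; [reflexivity |]].
    right. split; [reflexivity |]. apply fM_minus_cylinder; [lia | exact Hy].
  - exists a. split; [exact Ha | split; [reflexivity |]].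
    left. split; [reflexivity |]. apply fM_plus_cylinder; [exact Ha | exact Hy].
Qed.

Lemma TE_fM_inB (a : nat) (e : Z) (y : R) : irrational y -> inB a e y -> TE (fM y) = fM (T y).
Proof.
  intros Hirr [[_ [Ha Hy]] | [_ [Ha Hy]]]; cbv zeta in Hy.
  - apply (TE_fM_minus_cylinder (a - 1)); [lia | exact Hirr | exact Hy].
  - apply (TE_fM_plus_cylinder a); [exact Ha | exact Hirr | exact Hy].
Qed.

Lemma eicf_cyl_Int_part (b : nat) (eta : Z) (z : R) : irrational z -> eicf_cyl b eta z ->
  exists k : nat, b = (2 * k)%nat /\
    ((eta = 1%Z /\ Int_part (1 / z) = (2 * Z.of_nat k)%Z) \/
     (eta = (-1)%Z /\ Int_part (1 / z) = (2 * Z.of_nat k - 1)%Z)).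
Proof.
  intros Hz [k [Hk [Hb Hcyl]]]. exists k. split; [exact Hb |].
  assert (HK : 1 <= INR k) by apply (le_INR 1), Hk.
  destruct Hcyl as [[He [Hlo Hhi]] | [He [Hlo Hhi]]]; [left | right]; split; try exact He;
    apply rational_le_irrational in Hlo; auto with rational;
    apply irrational_le_rational in Hhi; auto with rational;
    rewrite Rdiv_lt_iff in Hlo by lra; rewrite Rlt_div_iff in Hhi by lra;
    apply Int_part_unique; rewrite ?minus_IZR, IZR_double_of_nat;
    rewrite Rle_div_iff, Rdiv_lt_iff by nra; nra.
Qed.

Lemma eicf_cyl_unique (b b' : nat) (eta eta' : Z) (z : R) : irrational z ->
  eicf_cyl b eta z -> eicf_cyl b' eta' z -> b = b' /\ eta = eta'.
Proof.
  intros Hz H H'.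
  destruct (eicf_cyl_Int_part _ _ _ Hz H) as [k [-> [[-> Hk] | [-> Hk]]]];
  destruct (eicf_cyl_Int_part _ _ _ Hz H') as [k' [-> [[-> Hk'] | [-> Hk']]]]; lia.
Qed.

Lemma TE_iter_fM (x : R) (a : nat -> nat) (e : nat -> Z) :
  irrational x -> is_OOCF_expansion x a e ->
  forall n : nat, irrational (Nat.iter n T x) /\ Nat.iter n TE (fM x) = fM (Nat.iter n T x).
Proof.
  intros Hx Hexp n. induction n as [| n [Hirr Hiter]]; [split; [exact Hx | reflexivity] |].
  destruct (Hexp (S n)) as [_ HB]; [lia |]. replace (S n - 1)%nat with n in HB by lia.
  assert (Hstep := TE_fM_inB _ _ _ Hirr HB). simpl.
  split.
  - apply irrational_fM. rewrite <- Hstep, <- Hiter. apply irrational_TE. rewrite Hiter.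
    apply irrational_fM, Hirr.
  - rewrite Hiter. exact Hstep.
Qed.

Lemma INR_phi_b (a : nat) (e : Z) : inD a e -> INR (phi_b a e) = 2 * INR a + IZR e - 1.
Proof.
  intros [[-> ->] | [Ha [-> | ->]]]; unfold phi_b; simpl Z.eqb; cbv iota.
  - simpl. lra.
  - rewrite mult_INR. simpl. lra.
  - rewrite mult_INR, minus_INR by lia. simpl. lra.
Qed.

Lemma inD_lower_bound (a : nat) (e : Z) : inD a e -> 1 <= INR a + IZR e / 2.
Proof.
  intros [[-> ->] | [Ha [-> | ->]]]; [simpl; lra | |];
    apply (le_INR 2) in Ha; simpl in Ha; lra.
Qed.

Section Convergents.

Variables (a : nat -> nat) (e : nat -> Z).
Hypothesis digits : forall j : nat, (1 <= j)%nat -> inD (a j) (e j).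

Local Notation phi_digits_b := (fun j => phi_b (a j) (e j)).
Local Notation phi_digits_eta := (fun j => phi_eta (a j) (e j)).

Lemma oocf_tail_ge_1 (m i : nat) : (1 <= i)%nat -> 1 <= oocf_tail a e i m.
Proof.
  revert i. induction m as [| m IH]; intros i Hi; simpl oocf_tail.
  - apply inD_lower_bound, digits, Hi.
  - assert (Ht := IH (S i) ltac:(lia)). set (t := oocf_tail a e (S i) m) in *.
    assert (Hd : 1 <= 2 - 1 / t) by (assert (1 / t <= 1) by (apply Rdiv_le_iff; lra); lra).
    assert (Hq : 0 < 1 / (2 - 1 / t) <= 1)
      by (split; [apply Rdiv_lt_0_compat | apply Rdiv_le_iff]; lra).
    destruct (digits i Hi) as [[-> ->] | [Ha [-> | ->]]];
      [| apply (le_INR 2) in Ha | apply (le_INR 2) in Ha]; simpl in *; unfold Rdiv in *; lra.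
Qed.

Lemma eicf_tail_phi (m i : nat) : (1 <= i)%nat ->
  eicf_tail phi_digits_b phi_digits_eta i m = 2 * oocf_tail a e i m - 1.
Proof.
  revert i. induction m as [| m IH]; intros i Hi; simpl oocf_tail; simpl eicf_tail;
    rewrite INR_phi_b by (apply digits, Hi).
  - lra.
  - rewrite IH by lia. assert (Ht := oocf_tail_ge_1 m (S i) ltac:(lia)).
    assert (Hinv : 1 / oocf_tail a e (S i) m <= 1) by (rewrite Rdiv_le_iff; lra).
    unfold phi_eta. field. unfold Rdiv in Hinv. repeat split; lra.
Qed.

Lemma eicf_conv_phi (n : nat) : (1 <= n)%nat ->
  eicf_conv phi_digits_b phi_digits_eta n = fM (oocf_conv a e n).
Proof.
  intros Hn. unfold eicf_conv, oocf_conv. rewrite eicf_tail_phi by lia.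
  assert (Ht := oocf_tail_ge_1 (n - 1) 1 ltac:(lia)).
  unfold fM. field. lra.
Qed.

End Convergents.

Theorem mainTheorem13 (x : R) (a : nat -> nat) (e : nat -> Z) :
  0 < x < 1 -> irrational x ->
  is_OOCF_expansion x a e ->
  is_EICF_expansion (fM x) (fun n => phi_b (a n) (e n)) (fun n => phi_eta (a n) (e n)) /\
  (forall (b : nat -> nat) (eta : nat -> Z), is_EICF_expansion (fM x) b eta ->
     forall n : nat, (1 <= n)%nat -> b n = phi_b (a n) (e n) /\ eta n = phi_eta (a n) (e n)) /\
  (forall n : nat, (1 <= n)%nat ->
     eicf_conv (fun k => phi_b (a k) (e k)) (fun k => phi_eta (a k) (e k)) n
     = fM (oocf_conv a e n)).
Proof.
  intros _ Hx Hexp.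
  assert (orbit := TE_iter_fM x a e Hx Hexp).
  assert (Hirr : forall n, irrational (Nat.iter n TE (fM x)))
    by (intros n; rewrite (proj2 (orbit n)); apply irrational_fM, orbit).
  assert (Hdigits : is_EICF_expansion (fM x) (fun n => phi_b (a n) (e n))
                                              (fun n => phi_eta (a n) (e n))).
  { intros n Hn. rewrite (proj2 (orbit (n - 1)%nat)). apply eicf_cyl_fM, (Hexp n Hn). }
  split; [exact Hdigits | split].
  - intros b eta Hb n Hn. exact (eicf_cyl_unique _ _ _ _ _ (Hirr _) (Hb n Hn) (Hdigits n Hn)).
  - apply eicf_conv_phi. intros j Hj. apply (Hexp j Hj).
Qed.
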